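(* Suppose the true density is $g=f_\theta$ for some $\theta\in\Theta$, and the kernel satisfies $$u^{\alpha*}_\theta(y)=M f_\theta^\alpha(y)u_\theta(y)+L\quad\text{for all }y,$$ for a vector $L\in\mathbb{R}^p$ depending only on $\alpha$ and $h$ and a nonsingular $p\times p$ matrix $M$ depending on $\theta,\alpha,h$, such that for each $j=1,\dots,p$ either $\int u_{\theta_j}f_\theta^{1+\alpha}=0$ or the $j$-th column of $M$ does not depend on $\theta$. Then the influence function of the minimum $S^*$-divergence functional $T^*_{(\alpha,\lambda)}$ at $G=F_\theta$ equals that of the minimum $S$-divergence functional at $F_\theta$, namely $$IF(y;F_\theta,T^*_{(\alpha,\lambda)})=\left(\int u_\theta u_\theta^Tf_\theta^{1+\alpha}\right)^{-1}\left[u_\theta(y)f_\theta^\alpha(y)-\int u_\theta f_\theta^{1+\alpha}\right].$$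
   Context: $\{F_\theta:\theta\in\Theta\subseteq\mathbb{R}^p\}$ is a parametric family on $\mathbb{R}$ with Lebesgue densities $f_\theta$, $u_\theta=\nabla_\theta\log f_\theta$ with components $u_{\theta_j}$. Fix $\alpha\ge0$, $\lambda\in\mathbb{R}$, $A=1+\lambda(1-\alpha)$, $B=\alpha-\lambda(1-\alpha)$, and $S_{(\alpha,\lambda)}(g,f)=\frac1A\int f^{1+\alpha}-\frac{1+\alpha}{AB}\int f^Bg^A+\frac1B\int g^{1+\alpha}$ (continuous limits when $A=0$ or $B=0$). $W(x,y,h)\ge0$ is a kernel with fixed bandwidth $h>0$, a probability density in $x$ for each $y$; $f^*_\theta(x)=\int W(x,y,h)f_\theta(y)dy$, $g^*(x)=\int W(x,y,h)dG(y)$, $\tilde u_\theta=\nabla_\theta\log f^*_\theta$, $u^{\alpha*}_\theta(y)=\int\tilde u_\theta(x)\{f^*_\theta(x)\}^\alpha W(x,y,h)dx$. The minimum $S^*$-divergence functional $T^*_{(\alpha,\lambda)}(G)$ minimizes $\theta\mapsto S_{(\alpha,\lambda)}(g^*,f^*_\theta)$ (solving $\int K(g^*/f^*_\theta-1)(f^*_\theta)^{1+\alpha}\tilde u_\theta=0$, $K(\delta)=((\delta+1)^A-1)/A$, or $\log(1+\delta)$ if $A=0$). The influence function is $IF(y;G,T)=\frac{\partial}{\partial\epsilon}T((1-\epsilon)G+\epsilon\wedge_y)|_{\epsilon=0}$, $\wedge_y$ the point mass at $y$. *)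

From HB Require Import structures.
From mathcomp Require Import all_boot all_order all_algebra.
From mathcomp Require Import all_classical all_reals all_analysis.
Import Order.TTheory GRing.Theory Num.Theory.
Import numFieldNormedType.Exports.
Local Open Scope classical_set_scope.
Local Open Scope ring_scope.

Set Implicit Arguments.
Unset Strict Implicit.
Unset Printing Implicit Defensive.

Definition RintL (R : realType) (F : R -> R) : R :=
  Rintegral (@lebesgue_measure R) setT F.

Definition Lintegrable (R : realType) (F : R -> R) : Prop :=
  (@lebesgue_measure R).-integrable setT (fun x => (F x)%:E).

Definition L2integrable (R : realType) (F : R * R -> R) : Prop :=
  ((@lebesgue_measure R) \x (@lebesgue_measure R))%E.-integrable setT
    (fun z => (F z)%:E).

Definition vint (R : realType) (p : nat) (F : R -> 'cV[R]_p) : 'cV[R]_p :=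
  \col_i RintL (fun x => F x i 0).

Definition mint (R : realType) (p : nat) (F : R -> 'M[R]_p) : 'M[R]_p :=
  \matrix_(i, j) RintL (fun x => F x i j).

Definition ej (R : realType) (p : nat) (j : 'I_p) : 'cV[R]_p := delta_mx j 0.

Definition pdiff (R : realType) (p : nat) (F : 'cV[R]_p -> R) (j : 'I_p)
  (th : 'cV[R]_p) : R := 'D_(ej R j) F th.

Definition grad (R : realType) (p : nat) (F : 'cV[R]_p -> R) (th : 'cV[R]_p)
  : 'cV[R]_p := \col_(j < p) pdiff F j th.

Definition score (R : realType) (p : nat) (f : 'cV[R]_p -> R -> R)
  (th : 'cV[R]_p) (x : R) : 'cV[R]_p :=
  grad (fun th' => ln (f th' x)) th.

Definition fstar (R : realType) (p : nat) (W : R -> R -> R -> R) (h : R)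
  (f : 'cV[R]_p -> R -> R) (th : 'cV[R]_p) (x : R) : R :=
  RintL (fun y => W x y h * f th y).

Definition utilde (R : realType) (p : nat) (W : R -> R -> R -> R) (h : R)
  (f : 'cV[R]_p -> R -> R) (th : 'cV[R]_p) (x : R) : 'cV[R]_p :=
  grad (fun th' => ln (fstar W h f th' x)) th.

Definition ualphastar (R : realType) (p : nat) (alpha : R)
  (W : R -> R -> R -> R) (h : R) (f : 'cV[R]_p -> R -> R)
  (th : 'cV[R]_p) (y : R) : 'cV[R]_p :=
  vint (fun x => (fstar W h f th x `^ alpha * W x y h) *: utilde W h f th x).

Definition Acoef (R : realType) (alpha lambda : R) : R :=
  1 + lambda * (1 - alpha).

Definition Kfun (R : realType) (A delta : R) : R :=
  if A == 0 then ln (1 + delta) else ((delta + 1) `^ A - 1) / A.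

(* integrand of the estimating equation of the minimum S*-divergence
   functional, for a smoothed data density gs = g* :
   x |-> K(g*(x)/f*_theta(x) - 1) f*_theta(x)^(1+alpha) u~_theta(x) *)
Definition Psi_integrand (R : realType) (p : nat) (alpha lambda : R)
  (W : R -> R -> R -> R) (h : R) (f : 'cV[R]_p -> R -> R)
  (gs : R -> R) (th : 'cV[R]_p) (x : R) : 'cV[R]_p :=
  (Kfun (Acoef alpha lambda) (gs x / fstar W h f th x - 1)
     * fstar W h f th x `^ (1 + alpha)) *: utilde W h f th x.

Definition Psi (R : realType) (p : nat) (alpha lambda : R)
  (W : R -> R -> R -> R) (h : R) (f : 'cV[R]_p -> R -> R)
  (gs : R -> R) (th : 'cV[R]_p) : 'cV[R]_p :=
  vint (Psi_integrand alpha lambda W h f gs th).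

(* smoothed density g*_eps of the contaminated distribution
   G_eps = (1-eps) F_theta + eps /\_y :
   g*_eps(x) = int W(x,z,h) dG_eps(z) = (1-eps) f*_theta(x) + eps W(x,y,h) *)
Definition gstar_contam (R : realType) (p : nat) (W : R -> R -> R -> R) (h : R)
  (f : 'cV[R]_p -> R -> R) (th : 'cV[R]_p) (y eps : R) (x : R) : R :=
  (1 - eps) * fstar W h f th x + eps * W x y h.

(* influence function of a functional T along the contamination path,
   given t(eps) = T((1-eps)G + eps /\_y), eps in [0,1]:
   the (right) derivative of t at eps = 0 *)
Definition IF_path (R : realType) (p : nat) (t : R -> 'cV[R]_p) : 'cV[R]_p :=
  lim ((fun e : R => e^-1 *: (t e - t 0)) @ 0^'+).

(* Differentiating the estimating equation along the contamination path
   [e |-> t e] (the implicit-function argument) gives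
   [J* IF = u^{alpha*}_theta(y) - xi*], where [J* = \int f*^(1+alpha) u~ u~^T]
   and [xi* = \int f*^(1+alpha) u~]. Since [f*^(1+alpha) u~ = f*^alpha d f*] and
   [d f* = \int W d f_theta], Fubini turns these smoothed integrals into
   integrals of [u^{alpha*}] against [d f_theta] and [f_theta], so the kernel
   condition yields [J* = M J] and [xi* = M xi + L]; the [L]-term of [J*]
   vanishes because [\int d f_theta = 0]. Cancelling the invertible [M] leaves
   [J IF = f_theta(y)^alpha u_theta(y) - xi]. *)

From mathcomp Require Import all_boot all_order all_algebra.
From mathcomp Require Import all_classical all_reals all_analysis.
From mathcomp Require Import ring.
Import Order.TTheory GRing.Theory Num.Theory.
Import numFieldNormedType.Exports.
Local Open Scope classical_set_scope.
Local Open Scope ring_scope.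

Set Implicit Arguments.
Unset Strict Implicit.
Unset Printing Implicit Defensive.

Section DifferentialAlongPaths.
Context {R : realType} {V W : normedModType R}.

Lemma diff_along_cvg (F : V -> W) (a l : V) (v : R -> V) :
  differentiable F a -> v @ 0^'+ --> l ->
  (fun e : R => e^-1 *: (F (e *: v e + a) - F a)) @ 0^'+ --> 'd F a l.
Proof.
move=> dF vl; set D := 'd F a.
set r := fun k : V => F (k + a) - (F a + D k).
have small_r : (fun e : R => e^-1 *: r (e *: v e)) @ 0^'+ --> (0 : W).
  have /eqaddoP ro := diff_locally dF.
  have [C C0 vC] : exists2 C, 0 < C & \forall e \near 0^'+, `|v e| <= C.
    exists (`|l| + 1); first by rewrite ltr_pwDr.
    near=> e; rewrite -(subrK l (v e)) (le_trans (ler_normD _ _)) // addrC lerD2l.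
    by rewrite -normrN opprB ltW //; near: e; move/cvgrPdist_lt: vl; apply; exact: ltr01.
  have ev0 : (fun e : R => e *: v e) @ 0^'+ --> (0 : V).
    by rewrite -(scale0r l); apply: cvgZ => //; exact: cvg_at_right_filter.
  apply/cvgr0Pnorm_le => // eps eps0.
  have ro' := ev0 _ (ro _ (divr_gt0 eps0 C0)).
  near=> e.
  have e0 : 0 < e by near: e; exact: nbhs_right_gt.
  have ve : `|v e| <= C by near: e.
  have re : `|r (e *: v e)| <= eps / C * `|e *: v e| by near: e; exact: ro'.
  rewrite normrZ normfV gtr0_norm //.
  rewrite -(ler_pM2l e0) mulrA mulfV ?gt_eqF // mul1r (le_trans re) //.
  rewrite normrZ gtr0_norm // mulrCA ler_pM2l // -mulrA ger_pMr //.
  by rewrite -(ler_pM2l C0) mulrA mulfV ?gt_eqF // mul1r mulr1.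
have -> : 'd F a l = 'd F a l + 0 by rewrite addr0.
apply: (@cvg_trans _ ((fun e => D (v e) + e^-1 *: r (e *: v e)) @ 0^'+)).
  apply: near_eq_cvg; near=> e.
  have e0 : 0 < e by near: e; exact: nbhs_right_gt.
  rewrite /r linearZ !scalerBr scalerDr scalerA mulVf ?gt_eqF // scale1r.
  by rewrite addrC opprD addrA subrK.
by apply: cvgD => //; apply: continuous_cvg => //; exact: diff_continuous.
Unshelve. all: end_near.
Qed.

Lemma diff_eq0_along_roots (F : V -> W) (a l : V) (v : R -> V) :
  differentiable F a -> F a = 0 ->
  (\forall e \near 0^'+, F (e *: v e + a) = 0) -> v @ 0^'+ --> l ->
  'd F a l = 0.
Proof.
move=> dF Fa0 Fv0 vl.
have quotient0 : (fun e : R => e^-1 *: (F (e *: v e + a) - F a)) @ 0^'+ --> 0.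
  apply: (@cvg_trans _ ((fun _ => 0) @ 0^'+)); last exact: cvg_cst.
  by apply: near_eq_cvg; near=> e; rewrite (near Fv0 e) // Fa0 subrr scaler0.
exact: norm_cvg_unique (diff_along_cvg dF vl) quotient0.
Unshelve. all: end_near.
Qed.

Lemma pair_cV_delta_sum (p : nat) (s : R) (v : 'cV[R]_p) :
  (s, v) = (s, 0) + \sum_(j < p) v j 0 *: ((0 : R), ej R j).
Proof.
have sum_pair (G : 'I_p -> R * 'cV[R]_p) :
    \sum_(j < p) G j = (\sum_(j < p) (G j).1, \sum_(j < p) (G j).2).
  by rewrite [LHS]surjective_pairing; congr (_, _); apply: big_morph.
rewrite sum_pair big1 => [|j _]; last exact: mulr0.
rewrite [in LHS](matrix_sum_delta v); congr (_, _); first by rewrite addr0.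
by rewrite add0r; apply: eq_bigr => j _; rewrite big_ord1.
Qed.

Lemma diff_pair_cV (p : nat) (F : R * 'cV[R]_p -> W) (a : R * 'cV[R]_p)
    (v : 'cV[R]_p) : differentiable F a ->
  'd F a (1, v) = 'D_(1, 0) F a + \sum_(j < p) v j 0 *: 'D_(0, ej R j) F a.
Proof.
move=> dF; rewrite deriveE //; under eq_bigr do rewrite deriveE //.
rewrite {1}pair_cV_delta_sum linearD linear_sum.
by congr (_ + _); apply: eq_bigr => j _; rewrite linearZ.
Qed.

End DifferentialAlongPaths.

Lemma root_path_derivative (R : realType) (p : nat) (W : normedModType R)
    (Phi : R * 'cV[R]_p -> W) (t : R -> 'cV[R]_p) (theta : 'cV[R]_p) :
  differentiable Phi (0, theta) -> (forall e, 0 <= e <= 1 -> Phi (e, t e) = 0) ->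
  t 0 = theta -> cvg ((fun e : R => e^-1 *: (t e - t 0)) @ 0^'+) ->
  'D_(1, 0) Phi (0, theta) + \sum_(j < p)
     lim ((fun e : R => e^-1 *: (t e - t 0)) @ 0^'+) j 0 *: 'D_(0, ej R j) Phi (0, theta)
  = 0.
Proof.
move=> Phi_diff t_root t0 IF_cvg; rewrite -diff_pair_cV //.
set IF := lim _.
apply: (diff_eq0_along_roots (l := ((1 : R), IF))
  (v := fun e => ((1 : R), e^-1 *: (t e - t 0))) Phi_diff).
- by rewrite -t0; apply: t_root; rewrite lexx ler01.
- near=> e.
  have e0 : 0 < e by near: e; exact: nbhs_right_gt.
  have e1 : e <= 1 by near: e; exact: nbhs_right_le.
  have -> : e *: ((1 : R), e^-1 *: (t e - t 0)) + (0, theta) = (e, t e).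
    rewrite [LHS]surjective_pairing; congr (_, _) => /=; first by rewrite addr0 [e%:A]mulr1.
    by rewrite scalerA mulfV ?gt_eqF // scale1r -t0 subrK.
  by apply: t_root; rewrite (ltW e0) e1.
- exact: cvg_pair (cvg_cst _) IF_cvg.
Unshelve. all: end_near.
Qed.

Section RealDerivatives.
Context {R : realType}.

Lemma derive_line (V W : normedModType R) (F : V -> W) (a v : V) :
  'D_v F a = 'D_1 (fun h : R => F (h *: v + a)) 0.
Proof.
rewrite /derive /= scale0r add0r.
suff -> : (fun h : R => h^-1 *: (F (h *: v + a) - F a)) =
  (fun h : R => h^-1 *: (F ((h *: (1 : R^o) + 0) *: v + a) - F a)) by [].
by apply/funext => h; rewrite addr0 [h *: (1 : R^o)]mulr1.
Qed.

Lemma derive_scale_root (W : normedModType R) (g : R -> R) (c : R -> W) (g' : R) :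
  g 0 = 0 -> is_derive (0 : R) (1 : R) g g' -> {for 0, continuous c} ->
  'D_1 (fun h : R => g h *: c h) 0 = g' *: c 0.
Proof.
move=> g0 [dg <-] cc; rewrite /derive /= g0 scale0r.
under eq_fun => h do rewrite subr0 scalerA.
apply: cvg_lim => //; apply: cvgZ.
  by move: dg; rewrite /derivable /= g0; under eq_fun => h do rewrite subr0.
by under eq_fun => h do rewrite addr0 [h%:A]mulr1; exact: cvg_within_filter.
Qed.

Lemma pdiff_locally_cst (p : nat) (Theta : set 'cV[R]_p)
    (F : 'cV[R]_p -> R) (c : R) (j : 'I_p) (a : 'cV[R]_p) :
  open Theta -> Theta a -> (forall th, Theta th -> F th = c) -> pdiff F j a = 0.
Proof.
move=> oT Ta FE; rewrite /pdiff (@near_eq_derive _ _ _ F (cst c)) ?derive_cst //.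
by apply: filterS (open_nbhs_nbhs (conj oT Ta)) => x /FE.
Qed.

Lemma pdiff_ln (p : nat) (F : 'cV[R]_p -> R) (j : 'I_p) (a : 'cV[R]_p) :
  differentiable F a -> 0 < F a ->
  pdiff (fun th => ln (F th)) j a = pdiff F j a / F a.
Proof.
move=> dF Fa; rewrite /pdiff !(derive_line _ a (ej R j)).
set g := fun h : R => F (h *: ej R j + a).
have g0 : g 0 = F a by rewrite /g scale0r add0r.
have dg : derivable g 0 1 by move: (@diff_derivable _ _ _ F a (ej R j) dF) => /derivable1P.
have dln : is_derive (g 0) (1 : R) (@ln R) (g 0)^-1 by apply: is_derive1_ln; rewrite g0.
have := is_derive1_comp dln (derivableP dg).
by move=> /(@derive_val _ _ _ _ _ _ _) /= ->; rewrite g0 mulrC.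
Qed.

Lemma Kfun0 (A : R) : Kfun A 0 = 0.
Proof. by rewrite /Kfun; case: eqP => _; rewrite ?addr0 ?ln1 // add0r powR1 subrr mul0r. Qed.

Lemma is_derive0_Kfun (A : R) : is_derive (0 : R) (1 : R) (Kfun A) 1.
Proof.
have d1 : is_derive (0 : R) (1 : R) (shift (1 : R)) 1 := is_derive_shift _ _ _.
have [->|A0] := eqVneq A 0.
  have -> : Kfun 0 = (@ln R) \o shift 1 by apply/funext => d; rewrite /Kfun eqxx addrC.
  have dln : is_derive (shift (1 : R) 0) (1 : R) (@ln R) (0 + 1)^-1.
    by apply: is_derive1_ln; rewrite /= add0r.
  by apply: (is_derive_eq (is_derive1_comp dln d1)); rewrite add0r invr1 mulr1.
have -> : Kfun A = A^-1 \*: ((@powR R) ^~ A \o shift 1 - cst 1).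
  by apply/funext => d; rewrite /Kfun (negbTE A0) /= mulrC.
have dpow : is_derive (shift (1 : R) 0) (1 : R) ((@powR R) ^~ A) (A * (0 + 1) `^ (A - 1)).
  by apply: is_derive1_powR; rewrite /= add0r.
have dK := is_deriveB (is_derive1_comp dpow d1) (is_derive_cst (1 : R) (0 : R) (1 : R)).
apply: (is_derive_eq (is_deriveZ A^-1 dK)).
by rewrite add0r powR1 !mulr1 subr0 /GRing.scale /= mulVf.
Qed.

Lemma derive_Kfun_root (W : normedModType R) (A : R) (g : R -> R) (c : R -> W)
    (g' : R) :
  g 0 = 0 -> is_derive (0 : R) (1 : R) g g' -> {for 0, continuous c} ->
  'D_1 (fun h : R => Kfun A (g h) *: c h) 0 = g' *: c 0.
Proof.
move=> g0 dg cc; apply: (derive_scale_root (g := Kfun A \o g)) => //=.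
  by rewrite g0 Kfun0.
have dK : is_derive (g 0) (1 : R) (Kfun A) 1 by rewrite g0; exact: is_derive0_Kfun.
by apply: (is_derive_eq (is_derive1_comp dK dg)); rewrite mul1r.
Qed.

Lemma derive_Kfun_ratio (V W : normedModType R) (A s : R)
    (G : V -> R) (U : V -> W) (a v : V) :
  differentiable G a -> 0 < G a -> {for a, continuous U} ->
  'D_v (fun x => Kfun A (G a / G x - 1) *: (G x `^ s *: U x)) a
  = - ('D_v G a / G a) *: (G a `^ s *: U a).
Proof.
move=> dG Ga0 cU; rewrite !(derive_line _ a v).
set g := fun h : R => G (h *: v + a).
have g0 : g 0 = G a by rewrite /g scale0r add0r.
have dg : derivable g 0 1 by move: (@diff_derivable _ _ _ G a v dG) => /derivable1P.
have gc : {for 0, continuous g}.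
  by apply: differentiable_continuous; apply/derivable1_diffP.
have root0 : G a / g 0 - 1 = 0 by rewrite g0 mulfV ?gt_eqF // subrr.
have d_ratio : is_derive (0 : R) (1 : R) (fun h => G a / g h - 1) (- ('D_1 g 0 / G a)).
  have gn0 : g 0 != 0 by rewrite g0 gt_eqF.
  have -> : (fun h => G a / g h - 1) = G a \*: (fun h => (g h)^-1) - cst 1.
    by apply/funext.
  apply: (is_derive_eq (is_deriveB (is_deriveZ (G a) (is_deriveV gn0 (derivableP dg)))
    (is_derive_cst (1 : R) (0 : R) (1 : R)))).
  rewrite /GRing.scale /= g0 subr0.
  by field; exact: lt0r_neq0.
have c_cont : {for 0, continuous (fun h : R => g h `^ s *: U (h *: v + a))}.
  apply: cvgZ; last first.
    apply: (@continuous_comp _ _ _ (fun h : R => h *: v + a) U); last first.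
      by rewrite /= scale0r add0r.
    by apply: cvgD; [exact: cvgZl cvg_id | exact: cvg_cst].
  apply: (@continuous_comp _ _ _ g ((@powR R) ^~ s)) => //.
  apply/differentiable_continuous/derivable1_diffP.
  by case: (is_derive1_powR s (_ : 0 < g 0)) => //; rewrite g0.
by rewrite (derive_Kfun_root A root0 d_ratio c_cont) g0 scale0r add0r.
Qed.

Lemma powR1D (x a : R) : 0 < x -> x `^ (1 + a) = x * x `^ a.
Proof.
move=> x0; rewrite powRD ?powRr1 //; first exact: ltW.
by apply/implyP => _; rewrite gt_eqF.
Qed.

End RealDerivatives.

Section LebesgueIntegralOnR.
Context {R : realType}.
Local Notation mu := (@lebesgue_measure R).
Implicit Types (g : R -> R) (c : R).

Lemma eq_RintL g1 g2 : g1 =1 g2 -> RintL g1 = RintL g2.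
Proof. by move=> /funext ->. Qed.

Lemma eq_Lintegrable g1 g2 : g1 =1 g2 -> Lintegrable g1 -> Lintegrable g2.
Proof. by move=> /funext ->. Qed.

Lemma LintegrableZl c g : Lintegrable g -> Lintegrable (fun x => c * g x).
Proof.
move=> ig; have := integrableZl measurableT c ig.
by apply: eq_integrable => //= x _; rewrite EFinM.
Qed.

Lemma LintegrableD g1 g2 : Lintegrable g1 -> Lintegrable g2 ->
  Lintegrable (fun x => g1 x + g2 x).
Proof.
move=> i1 i2; have := integrableD measurableT i1 i2.
by apply: eq_integrable => //= x _; rewrite EFinD.
Qed.

Lemma RintLZl c g : Lintegrable g -> RintL (fun x => c * g x) = c * RintL g.
Proof. by move=> ig; rewrite /RintL RintegralZl. Qed.

Lemma RintLD g1 g2 : Lintegrable g1 -> Lintegrable g2 ->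
  RintL (fun x => g1 x + g2 x) = RintL g1 + RintL g2.
Proof. by move=> i1 i2; rewrite /RintL RintegralD. Qed.

Lemma RintLB g1 g2 : Lintegrable g1 -> Lintegrable g2 ->
  RintL (fun x => g1 x - g2 x) = RintL g1 - RintL g2.
Proof. by move=> i1 i2; rewrite /RintL RintegralB. Qed.

Lemma RintL_sum (I : Type) (s : seq I) (c : I -> R) (g : I -> R -> R) :
  (forall k, Lintegrable (g k)) ->
  Lintegrable (fun x => \sum_(k <- s) c k * g k x) /\
  RintL (fun x => \sum_(k <- s) c k * g k x) = \sum_(k <- s) c k * RintL (g k).
Proof.
move=> ig; elim: s => [|k s [IHi IHe]].
  rewrite big_nil; under eq_fun do rewrite big_nil.
  by split; [exact: integrable0 | rewrite /RintL /Rintegral integral0].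
rewrite big_cons; under eq_fun do rewrite big_cons.
have ik : Lintegrable (fun x => c k * g k x) by exact: LintegrableZl.
by split; [exact: LintegrableD | rewrite RintLD // IHe RintLZl].
Qed.

Lemma integral_RintL g : Lintegrable g -> (\int[mu]_x (g x)%:E)%E = (RintL g)%:E.
Proof. by move=> ig; rewrite /RintL /Rintegral fineK //; exact: integrable_fin_num. Qed.

Lemma RintL_Fubini (a : R -> R) (K : R -> R -> R) (b : R -> R) :
  L2integrable (fun q : R * R => a q.1 * K q.1 q.2 * b q.2) ->
  Lintegrable (fun x => a x * RintL (fun z => K x z * b z)) ->
  (forall z, Lintegrable (fun x => a x * K x z)) ->
  RintL (fun x => a x * RintL (fun z => K x z * b z))
  = RintL (fun z => RintL (fun x => a x * K x z) * b z).
Proof.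
move=> iF iL iaK.
have inner_x : (\int[mu]_x (a x * RintL (fun z => K x z * b z))%:E)%E
    = (\int[mu]_x \int[mu]_z (a x * K x z * b z)%:E)%E.
  apply: ae_eq_integral => //; first exact: measurable_int iL.
    exact: (measurable_fubini_F iF).
  apply: filterS (ae_integrable1 iF) => x /= ix _.
  rewrite (integral_RintL ix); congr EFin.
  under [RHS]eq_Rintegral do rewrite -mulrA.
  (* [K x z * b z] is known to be integrable in [z] only where [a x != 0]. *)
  have [->|ax0] := eqVneq (a x) 0.
    by rewrite !mul0r; under eq_Rintegral do rewrite mul0r; rewrite Rintegral_cst ?mul0r.
  rewrite [RHS]RintegralZl //.
  have := integrableZl measurableT (a x)^-1 ix.
  by apply: eq_integrable => //= z _; rewrite -EFinM !mulrA mulVf // mul1r.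
have inner_z : (\int[mu]_z (RintL (fun x => a x * K x z) * b z)%:E)%E
    = (\int[mu]_z \int[mu]_x (a x * K x z * b z)%:E)%E.
  apply: eq_integral => z _; rewrite (integral_RintL (g := fun x => a x * K x z * b z)).
    by congr EFin; rewrite /RintL RintegralZr //; exact: iaK.
  have := integrableZl measurableT (b z) (iaK z).
  by apply: eq_integrable => //= x _; rewrite -EFinM mulrC.
by rewrite /RintL /Rintegral inner_x inner_z (Fubini iF).
Qed.

End LebesgueIntegralOnR.

Lemma mulmx_sum_col (R : comPzSemiRingType) (m n : nat) (A : 'M[R]_(m, n)) (v : 'cV[R]_n) :
  A *m v = \sum_(j < n) v j 0 *: col j A.
Proof.
apply/colP => i; rewrite !mxE summxE; apply: eq_bigr => j _.
by rewrite !mxE mulrC.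
Qed.

Lemma col_mulmx (R : pzSemiRingType) (m n k : nat) (A : 'M[R]_(m, n))
    (B : 'M[R]_(n, k)) (j : 'I_k) :
  col j (A *m B) = A *m col j B.
Proof. by rewrite !colE mulmxA. Qed.

Lemma matrix_colP (R : Type) (m n : nat) (A B : 'M[R]_(m, n)) :
  (forall j, col j A = col j B) -> A = B.
Proof. by move=> AB; apply/matrixP => i j; move/colP/(_ i): (AB j); rewrite !mxE. Qed.

Lemma col_scale_outer (R : comPzSemiRingType) (n : nat) (c : R) (w : 'cV[R]_n)
    (j : 'I_n) :
  col j (c *: (w *m w^T)) = (c * w j 0) *: w.
Proof.
by apply/colP => i; rewrite !mxE big_ord1 !mxE [w i _ * _]mulrC mulrA.
Qed.

Lemma mulmx_factored_solve (R : comUnitRingType) (n : nat) (M J : 'M[R]_n)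
    (b x : 'cV[R]_n) :
  M \in unitmx -> J \in unitmx -> M *m b = (M *m J) *m x -> x = invmx J *m b.
Proof. by move=> Mu Ju; rewrite -mulmxA => /(can_inj (mulKmx Mu)) ->; rewrite mulKmx. Qed.

Section VectorIntegral.
Context {R : realType} {p : nat}.
Implicit Types (F G : R -> 'cV[R]_p) (b : R -> R).

Definition vintegrable F := forall i, Lintegrable (fun x => F x i 0).

Lemma vintD F G : vintegrable F -> vintegrable G ->
  vint (fun x => F x + G x) = vint F + vint G.
Proof.
move=> iF iG; apply/colP => i; rewrite !mxE -RintLD //.
by apply: eq_RintL => x; rewrite mxE.
Qed.

Lemma vintB F G : vintegrable F -> vintegrable G ->
  vint (fun x => F x - G x) = vint F - vint G.
Proof.
move=> iF iG; apply/colP => i; rewrite !mxE -RintLB //.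
by apply: eq_RintL => x; rewrite !mxE.
Qed.

Lemma vintN F :
  vintegrable F -> vint (fun x => - F x) = - vint F.
Proof.
move=> iF; apply/colP => i; rewrite !mxE -mulN1r -RintLZl //.
by apply: eq_RintL => x; rewrite !mxE mulN1r.
Qed.

Lemma vint_mulmx (A : 'M[R]_p) F : vintegrable F ->
  vintegrable (fun x => A *m F x) /\ vint (fun x => A *m F x) = A *m vint F.
Proof.
move=> iF; have sum_i i := RintL_sum (index_enum 'I_p) (A i) iF.
have AF i x : \sum_(k <- index_enum 'I_p) A i k * F x k 0 = (A *m F x) i 0.
  by rewrite mxE.
split=> [i|]; first exact: eq_Lintegrable (AF i) (sum_i i).1.
apply/colP => i; rewrite !mxE -(eq_RintL (AF i)) (sum_i i).2.
by apply: eq_bigr => k _; rewrite mxE.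
Qed.

Lemma vintZ_cst b (v : 'cV[R]_p) : Lintegrable b ->
  vintegrable (fun x => b x *: v) /\ vint (fun x => b x *: v) = RintL b *: v.
Proof.
move=> ib; have bv i x : v i 0 * b x = (b x *: v) i 0 by rewrite mxE mulrC.
split=> [i|]; first exact: eq_Lintegrable (bv i) (LintegrableZl _ ib).
by apply/colP => i; rewrite !mxE -(eq_RintL (bv i)) RintLZl // mulrC.
Qed.

Lemma vint_affine b (M : 'M[R]_p) F (L : 'cV[R]_p) :
  Lintegrable b -> vintegrable (fun x => b x *: F x) ->
  vint (fun x => b x *: (M *m F x + L)) = M *m vint (fun x => b x *: F x) + RintL b *: L.
Proof.
move=> ib ibF; have [iMF MF] := vint_mulmx M ibF; have [ibL bL] := vintZ_cst L ib.
rewrite -MF -bL -vintD //; congr vint; apply/funext => x.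
by rewrite scalerDr scalemxAr.
Qed.

Lemma col_mint (F : R -> 'M[R]_p) (j : 'I_p) :
  col j (mint F) = vint (fun x => col j (F x)).
Proof. by apply/colP => i; rewrite !mxE; apply: eq_RintL => x; rewrite mxE. Qed.

End VectorIntegral.

Section SmoothedModel.
Variables (R : realType) (p : nat) (f : 'cV[R]_p -> R -> R)
  (W : R -> R -> R -> R) (alpha h : R) (theta : 'cV[R]_p).
Local Notation fs := (fstar W h f theta).
Local Notation ut := (utilde W h f theta).
Local Notation u := (score f theta).

Hypothesis f_pos : forall z, 0 < f theta z.
Hypothesis fs_pos : forall x, 0 < fs x.
Hypothesis f_diff : forall z, differentiable (fun th => f th z) theta.
Hypothesis fs_diff : forall x, differentiable (fun th => fstar W h f th x) theta.

Lemma pdiff_f_score z j : pdiff (fun th => f th z) j theta = f theta z * u z j 0.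
Proof. by rewrite /score /grad mxE pdiff_ln // mulrC divfK // gt_eqF. Qed.

Lemma pdiff_fstar_utilde x j :
  pdiff (fun th => fstar W h f th x) j theta = fs x * ut x j 0.
Proof. by rewrite /utilde /grad mxE pdiff_ln // mulrC divfK // gt_eqF. Qed.

Hypothesis kernel_int : forall i z,
  Lintegrable (fun x => fs x `^ alpha * W x z h * ut x i 0).

Lemma vint_ualphastar (b : R -> R) :
  (forall i, L2integrable (fun q : R * R =>
     ut q.1 i 0 * fs q.1 `^ alpha * W q.1 q.2 h * b q.2)) ->
  (forall i, Lintegrable (fun x =>
     ut x i 0 * fs x `^ alpha * RintL (fun z => W x z h * b z))) ->
  vint (fun x => (fs x `^ alpha * RintL (fun z => W x z h * b z)) *: ut x)
  = vint (fun z => b z *: ualphastar alpha W h f theta z).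
Proof.
move=> iq ix; apply/colP => i; rewrite !mxE.
have ker_i z : Lintegrable (fun x => ut x i 0 * fs x `^ alpha * W x z h).
  by apply: eq_Lintegrable (kernel_int i z) => x; ring.
rewrite -(eq_RintL (g1 := fun x => ut x i 0 * fs x `^ alpha *
  RintL (fun z => W x z h * b z))); last by move=> x; rewrite !mxE; ring.
rewrite (RintL_Fubini (iq i) (ix i) ker_i); apply: eq_RintL => z.
rewrite !mxE mulrC; congr (_ * _); apply: eq_RintL => x.
by rewrite !mxE; ring.
Qed.

Variables (M : 'M[R]_p) (L : 'cV[R]_p).
Hypothesis kernel_cond : forall z,
  ualphastar alpha W h f theta z = M *m (f theta z `^ alpha *: u z) + L.

Lemma vint_kernel_transfer (b : R -> R) :
  Lintegrable b -> vintegrable (fun z => (b z * f theta z `^ alpha) *: u z) ->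
  (forall i, L2integrable (fun q : R * R =>
     ut q.1 i 0 * fs q.1 `^ alpha * W q.1 q.2 h * b q.2)) ->
  (forall i, Lintegrable (fun x =>
     ut x i 0 * fs x `^ alpha * RintL (fun z => W x z h * b z))) ->
  vint (fun x => (fs x `^ alpha * RintL (fun z => W x z h * b z)) *: ut x)
  = M *m vint (fun z => (b z * f theta z `^ alpha) *: u z) + RintL b *: L.
Proof.
move=> ib ibu iq ix; rewrite vint_ualphastar //.
under eq_fun do rewrite kernel_cond.
under [X in M *m vint X]eq_fun do rewrite -scalerA.
by apply: vint_affine => //; under eq_fun do rewrite scalerA.
Qed.

Hypothesis fs_pdiff_int : forall x j,
  pdiff (fun th => fstar W h f th x) j theta
  = RintL (fun z => W x z h * pdiff (fun th => f th z) j theta).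

Lemma smoothed_info_factor :
  (forall j, RintL (fun z => pdiff (fun th => f th z) j theta) = 0) ->
  (forall j, Lintegrable (fun z => pdiff (fun th => f th z) j theta)) ->
  (forall i j, Lintegrable (fun z =>
     f theta z `^ (1 + alpha) * u z i 0 * u z j 0)) ->
  (forall i j, Lintegrable (fun x =>
     fs x `^ (1 + alpha) * ut x i 0 * ut x j 0)) ->
  (forall i j, L2integrable (fun q : R * R => ut q.1 i 0 * fs q.1 `^ alpha *
     W q.1 q.2 h * pdiff (fun th => f th q.2) j theta)) ->
  mint (fun x => fs x `^ (1 + alpha) *: (ut x *m (ut x)^T))
  = M *m mint (fun z => f theta z `^ (1 + alpha) *: (u z *m (u z)^T)).
Proof.
move=> df0 idf iu ius iq.
apply: matrix_colP => j; rewrite col_mulmx [LHS]col_mint [in RHS]col_mint.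
under eq_fun do rewrite col_scale_outer.
under [in RHS]eq_fun do rewrite col_scale_outer.
have smoothed x : fs x `^ (1 + alpha) * ut x j 0
    = fs x `^ alpha * RintL (fun z => W x z h * pdiff (fun th => f th z) j theta).
  by rewrite -fs_pdiff_int pdiff_fstar_utilde powR1D //; ring.
have raw z : f theta z `^ (1 + alpha) * u z j 0
    = pdiff (fun th => f th z) j theta * f theta z `^ alpha.
  by rewrite pdiff_f_score powR1D //; ring.
under eq_fun do rewrite smoothed.
under [in RHS]eq_fun do rewrite raw.
rewrite vint_kernel_transfer // ?df0 ?scale0r ?addr0 // => i.
- by apply: eq_Lintegrable (iu i j) => z; rewrite [RHS]mxE -raw; ring.
- by apply: eq_Lintegrable (ius i j) => x; rewrite -[in RHS]mulrA -smoothed; ring.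
Qed.

Lemma smoothed_mean_score :
  Lintegrable (f theta) -> RintL (f theta) = 1 ->
  (forall i, Lintegrable (fun z => f theta z `^ (1 + alpha) * u z i 0)) ->
  (forall i, Lintegrable (fun x => fs x `^ (1 + alpha) * ut x i 0)) ->
  (forall i, L2integrable (fun q : R * R =>
     ut q.1 i 0 * fs q.1 `^ alpha * W q.1 q.2 h * f theta q.2)) ->
  vint (fun x => fs x `^ (1 + alpha) *: ut x)
  = M *m vint (fun z => f theta z `^ (1 + alpha) *: u z) + L.
Proof.
move=> if1 f1 iu ius iq.
have smoothed x : fs x `^ (1 + alpha)
    = fs x `^ alpha * RintL (fun z => W x z h * f theta z).
  by rewrite powR1D // mulrC.
have raw z : f theta z `^ (1 + alpha) = f theta z * f theta z `^ alpha.
  exact: powR1D.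
under eq_fun do rewrite smoothed.
under [in RHS]eq_fun do rewrite raw.
rewrite vint_kernel_transfer // ?f1 ?scale1r // => i.
- by apply: eq_Lintegrable (iu i) => z; rewrite [RHS]mxE raw.
- by apply: eq_Lintegrable (ius i) => x; rewrite -[in RHS]mulrA -smoothed; ring.
Qed.

Variable lambda : R.

Lemma vint_derive_Psi_contam (y : R) :
  (forall i, Lintegrable (fun x => fs x `^ (1 + alpha) * ut x i 0)) ->
  vint (fun x => 'D_1 (fun e : R =>
     Psi_integrand alpha lambda W h f (gstar_contam W h f theta y e) theta x) 0)
  = ualphastar alpha W h f theta y - vint (fun x => fs x `^ (1 + alpha) *: ut x).
Proof.
move=> ius.
have pointwise x : 'D_1 (fun e : R =>
     Psi_integrand alpha lambda W h f (gstar_contam W h f theta y e) theta x) 0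
    = (fs x `^ alpha * W x y h) *: ut x - fs x `^ (1 + alpha) *: ut x.
  have fs0 : fs x != 0 by rewrite gt_eqF.
  have mix e : ((1 - e) * fs x + e * W x y h) / fs x - 1 = e * (W x y h / fs x - 1).
    by field.
  have root0 : 0 * (W x y h / fs x - 1) = 0 by rewrite mul0r.
  have d_lin : is_derive (0 : R) (1 : R) (fun e => e * (W x y h / fs x - 1))
      (W x y h / fs x - 1).
    apply: (is_derive_eq (is_deriveM (is_derive_id (0 : R) (1 : R))
      (is_derive_cst (W x y h / fs x - 1) (0 : R) (1 : R)))).
    by rewrite /GRing.scale /= mul0r add0r mulr1.
  have c_cont : {for 0, continuous (fun _ : R => fs x `^ (1 + alpha) *: ut x)}.
    exact: cst_continuous.
  rewrite /Psi_integrand /gstar_contam.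
  under eq_fun do rewrite -scalerA mix.
  rewrite (derive_Kfun_root _ root0 d_lin c_cont).
  by rewrite scalerA -scalerBl powR1D //; congr (_ *: _); field.
rewrite (eq_fun pointwise) vintB // => i.
- by apply: eq_Lintegrable (kernel_int i y) => x; rewrite !mxE.
- by apply: eq_Lintegrable (ius i) => x; rewrite !mxE.
Qed.

Lemma vint_derive_Psi_theta (y : R) j :
  (forall x, {for theta, continuous (fun th => utilde W h f th x)}) ->
  (forall i, Lintegrable (fun x => fs x `^ (1 + alpha) * ut x i 0 * ut x j 0)) ->
  vint (fun x => 'D_(ej R j) (fun th =>
     Psi_integrand alpha lambda W h f (gstar_contam W h f theta y 0) th x) theta)
  = - col j (mint (fun x => fs x `^ (1 + alpha) *: (ut x *m (ut x)^T))).
Proof.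
move=> ut_cont ius.
have pointwise x : 'D_(ej R j) (fun th =>
     Psi_integrand alpha lambda W h f (gstar_contam W h f theta y 0) th x) theta
    = - ((fs x `^ (1 + alpha) * ut x j 0) *: ut x).
  rewrite /Psi_integrand /gstar_contam subr0 mul1r mul0r addr0.
  under eq_fun do rewrite -scalerA.
  rewrite derive_Kfun_ratio //.
  have := pdiff_fstar_utilde x j; rewrite /pdiff => ->.
  by rewrite mulrAC mulfV ?gt_eqF // mul1r scalerA mulNr scaleNr mulrC.
rewrite (eq_fun pointwise) vintN; last first.
  by move=> i; apply: eq_Lintegrable (ius i) => x; rewrite [RHS]mxE; ring.
by rewrite [in RHS]col_mint; under [in RHS]eq_fun do rewrite col_scale_outer.
Qed.

End SmoothedModel.

Theorem corollary3 (R : realType) (p : nat) (Theta : set 'cV[R]_p)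
  (f : 'cV[R]_p -> R -> R) (W : R -> R -> R -> R) (alpha lambda h : R)
  (M : 'cV[R]_p -> 'M[R]_p) (L : 'cV[R]_p)
  (theta : 'cV[R]_p) (y : R) (t : R -> 'cV[R]_p) :
  (* parameter space, true parameter *)
  open Theta -> Theta theta ->
  (* {f_th} is a family of (positive) Lebesgue densities *)
  (forall th, Theta th -> forall x, 0 < f th x) ->
  (forall th, Theta th -> Lintegrable (f th) /\ RintL (f th) = 1) ->
  (* tuning parameters; lambda is arbitrary *)
  0 <= alpha -> 0 < h ->
  (* W(.,z,h) is a probability density for every z *)
  (forall x z, 0 <= W x z h) ->
  (forall z, Lintegrable (fun x => W x z h) /\ RintL (fun x => W x z h) = 1) ->
  (forall th, Theta th -> forall x, 0 < fstar W h f th x) ->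
  (* kernel condition: u^{alpha*}_th(z) = M(th) f_th(z)^alpha u_th(z) + L *)
  (forall th, Theta th -> forall z,
      ualphastar alpha W h f th z
      = M th *m (f th z `^ alpha *: score f th z) + L) ->
  (forall th, Theta th -> M th \in unitmx) ->
  (forall j : 'I_p,
      RintL (fun z => score f theta z j 0 * f theta z `^ (1 + alpha)) = 0
      \/ (forall th1 th2, Theta th1 -> Theta th2 -> col j (M th1) = col j (M th2))) ->
  (* t(eps) = T*_{(alpha,lambda)}((1-eps) F_theta + eps /\_y), eps in [0,1]:
     a root in Theta of the estimating equation, with T*(F_theta) = theta *)
  (forall e, 0 <= e <= 1 ->
      Theta (t e) /\ Psi alpha lambda W h f (gstar_contam W h f theta y e) (t e) = 0) ->
  t 0 = theta ->
  (* the influence function exists *)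
  cvg ((fun e : R => e^-1 *: (t e - t 0)) @ 0^'+) ->
  (* ---- regularity conditions (standard, implicit in the paper) ---- *)
  (* nonsingular information-type matrix *)
  mint (fun z => f theta z `^ (1 + alpha) *: (score f theta z *m (score f theta z)^T))
    \in unitmx ->
  (* pointwise smoothness in theta *)
  (forall z, differentiable (fun th => f th z) theta) ->
  (forall x, differentiable (fun th => fstar W h f th x) theta) ->
  (forall x, {for theta, continuous (fun th => utilde W h f th x)}) ->
  (* differentiation under the integral sign *)
  (forall x (j : 'I_p), pdiff (fun th => fstar W h f th x) j theta
      = RintL (fun z => W x z h * pdiff (fun th => f th z) j theta)) ->
  (forall j : 'I_p, pdiff (fun th => RintL (f th)) j theta
      = RintL (fun z => pdiff (fun th => f th z) j theta)) ->
  differentiable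
    (fun q : R * 'cV[R]_p => Psi alpha lambda W h f (gstar_contam W h f theta y q.1) q.2)
    (0, theta) ->
  'D_(1, 0) (fun q : R * 'cV[R]_p =>
       Psi alpha lambda W h f (gstar_contam W h f theta y q.1) q.2) (0, theta)
    = vint (fun x => 'D_1 (fun e : R =>
        Psi_integrand alpha lambda W h f (gstar_contam W h f theta y e) theta x) 0) ->
  (forall j : 'I_p,
    'D_(0, ej R j) (fun q : R * 'cV[R]_p =>
       Psi alpha lambda W h f (gstar_contam W h f theta y q.1) q.2) (0, theta)
    = vint (fun x => 'D_(ej R j) (fun th =>
        Psi_integrand alpha lambda W h f (gstar_contam W h f theta y 0) th x) theta)) ->
  (* integrability conditions *)
  (forall i j : 'I_p, Lintegrable (fun z =>
      f theta z `^ (1 + alpha) * score f theta z i 0 * score f theta z j 0)) ->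
  (forall i : 'I_p, Lintegrable (fun z => f theta z `^ (1 + alpha) * score f theta z i 0)) ->
  (forall j : 'I_p, Lintegrable (fun z => pdiff (fun th => f th z) j theta)) ->
  (forall i j : 'I_p, Lintegrable (fun x =>
      fstar W h f theta x `^ (1 + alpha) * utilde W h f theta x i 0
        * utilde W h f theta x j 0)) ->
  (forall i : 'I_p, Lintegrable (fun x =>
      fstar W h f theta x `^ (1 + alpha) * utilde W h f theta x i 0)) ->
  (forall (i : 'I_p) z, Lintegrable (fun x =>
      fstar W h f theta x `^ alpha * W x z h * utilde W h f theta x i 0)) ->
  (forall i j : 'I_p, L2integrable (fun q : R * R =>
      utilde W h f theta q.1 i 0 * fstar W h f theta q.1 `^ alpha * W q.1 q.2 h
        * pdiff (fun th => f th q.2) j theta)) ->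
  (forall i : 'I_p, L2integrable (fun q : R * R =>
      utilde W h f theta q.1 i 0 * fstar W h f theta q.1 `^ alpha * W q.1 q.2 h
        * f theta q.2)) ->
  (* conclusion: IF(y; F_theta, T-star) equals the S-divergence influence function *)
  IF_path t
  = invmx (mint (fun z =>
        f theta z `^ (1 + alpha) *: (score f theta z *m (score f theta z)^T)))
    *m (f theta y `^ alpha *: score f theta y
        - vint (fun z => f theta z `^ (1 + alpha) *: score f theta z)).
Proof.
move=> Theta_open Theta_theta f_pos f_dens _ _ _ _ fs_pos kernel M_unit _ t_root t0
  IF_cvg J_unit f_diff fs_diff ut_cont fs_pdiff_int f_pdiff_int Phi_diff Phi_eps
  Phi_theta iu_info iu_mean i_pdiff ius_info ius_mean kernel_int iq_pdiff iq_f.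
have f_pos0 := f_pos theta Theta_theta.
have fs_pos0 := fs_pos theta Theta_theta.
have kernel0 := kernel theta Theta_theta.
have [f_int f_one] := f_dens theta Theta_theta.
have pdiff_f_int0 j : RintL (fun z => pdiff (fun th => f th z) j theta) = 0.
  rewrite -f_pdiff_int; apply: (@pdiff_locally_cst _ _ _ _ 1 _ _ Theta_open Theta_theta).
  by move=> th /f_dens[].
pose Js := mint (fun x => fstar W h f theta x `^ (1 + alpha) *:
  (utilde W h f theta x *m (utilde W h f theta x)^T)).
have := root_path_derivative Phi_diff (fun e e01 => (t_root e e01).2) t0 IF_cvg.
rewrite /IF_path; set IF := lim _.
rewrite Phi_eps (vint_derive_Psi_contam fs_pos0 kernel_int lambda y ius_mean).
rewrite (eq_bigr (fun j => - (IF j 0 *: col j Js))) => [|j _]; last first.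
  by rewrite Phi_theta (vint_derive_Psi_theta fs_pos0 fs_diff lambda y ut_cont
    (ius_info^~ j)) scalerN.
move/eqP; rewrite sumrN -mulmx_sum_col subr_eq0 => /eqP linearized.
rewrite kernel0 (smoothed_mean_score f_pos0 fs_pos0 kernel_int kernel0 f_int f_one
  iu_mean ius_mean iq_f) in linearized.
rewrite /Js (smoothed_info_factor f_pos0 fs_pos0 f_diff fs_diff kernel_int kernel0
  fs_pdiff_int pdiff_f_int0 i_pdiff iu_info ius_info iq_pdiff) in linearized.
apply: (mulmx_factored_solve (M_unit theta Theta_theta) J_unit).
by rewrite mulmxBr -linearized opprD addrACA subrr addr0.
Qed.
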